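(* Let $n,b$ be integers with $1<n<b$, and let $\Gamma$ be the $(n,b)$-Hoey-Sloane graph. If $(c_1,c_2)$ is an edge of $\Gamma$ with edge label $(d_1,d_2)$, then $(n-1-c_1,\,n-1-c_2)$ is also an edge of $\Gamma$, and $(b-1-d_1,\,b-1-d_2)$ is one of its edge labels.
   Context: Let $\lambda(x)$ denote the least non-negative residue of $x$ modulo $b$. The $(n,b)$-mother graph $M$ is the directed graph on vertex set $\{0,\ldots,b-1\}$ whose edges are the ordered pairs of digits $(d_1,d_2)$ with $\lambda(d_1+(b-n)d_2)\le n-1$. The $(n,b)$-Hoey-Sloane graph $\Gamma$ is the edge-labelled directed graph with vertex set (states) $\{0,1,\ldots,n-1\}$ in which, for states $c_1,c_2$, the pair $(c_1,c_2)$ is an edge precisely when the set $\{(d_1,d_2)\text{ an edge of }M \mid n d_2-d_1+c_1=b\,c_2\}$ is nonempty; this set is the collection of edge labels of $(c_1,c_2)$. (An input $(d_1,d_2)$ thus encodes one step of multiplying a number by $n$ in base $b$: multiplicand digit $d_2$, incoming carry $c_1$, product digit $d_1$, outgoing carry $c_2$.) *)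

From mathcomp Require Import all_boot.
Set Implicit Arguments. Unset Strict Implicit. Unset Printing Implicit Defensive.

(* lambda x = least non-negative residue of x modulo b (x >= 0 here since n < b) *)
Definition lambda (b x : nat) : nat := x %% b.

(* (d1,d2) is an edge of the (n,b)-mother graph: digits < b and
   lambda(d1 + (b-n) d2) <= n-1  (note b - n is a genuine difference as n < b) *)
Definition mother_edge (n b d1 d2 : nat) : bool :=
  [&& d1 < b, d2 < b & lambda b (d1 + (b - n) * d2) <= n - 1].

(* (d1,d2) is an edge label of (c1,c2) in the (n,b)-Hoey-Sloane graph:
   c1, c2 states in {0..n-1}, (d1,d2) an edge of M, and
   n d2 - d1 + c1 = b c2, written over nat as n d2 + c1 = b c2 + d1 *)
Definition hs_label (n b c1 c2 d1 d2 : nat) : bool :=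
  [&& c1 < n, c2 < n, mother_edge n b d1 d2 & n * d2 + c1 == b * c2 + d1].

Definition hs_edge (n b c1 c2 : nat) : Prop :=
  exists d1 d2, hs_label n b c1 c2 d1 d2.

From mathcomp Require Import all_boot.
From mathcomp Require Import zify.

Set Implicit Arguments.
Unset Strict Implicit.
Unset Printing Implicit Defensive.

(* Complementing every digit (d |-> b-1-d) and every carry (c |-> n-1-c) is
   the symmetry.  The carry equation n d2 + c1 = b c2 + d1 survives because
   each side adds up with its complement to n b - 1.  The mother-graph
   condition survives because x = d1 + (b-n) d2 and its complement x' satisfy
   x + x' = (b-n) b + (n-1), so x' mod b = (n-1) - (x mod b). *)

Lemma mulnD_compl (a m d : nat) : d <= m -> a * d + a * (m - d) = a * m.
Proof. by move=> le_dm; rewrite -mulnDr subnKC. Qed.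

Lemma modn_compl (b k q x y : nat) :
  k < b -> x + y = q * b + k -> x %% b <= k -> y %% b = k - x %% b.
Proof.
move=> lt_kb sum_xy le_xk.
have : x %% b + y == x %% b + (k - x %% b) %[mod b].
  by rewrite modnDml sum_xy modnMDl subnKC.
by rewrite eqn_modDl => /eqP ->; rewrite modn_small // (leq_ltn_trans (leq_subr _ _)).
Qed.

Lemma mother_digit_compl_sum (n b d1 d2 : nat) :
  0 < n -> n <= b -> d1 < b -> d2 < b ->
  (d1 + (b - n) * d2) + ((b - 1 - d1) + (b - n) * (b - 1 - d2))
  = (b - n) * b + (n - 1).
Proof.
move=> n_gt0 le_nb lt_d1b lt_d2b.
rewrite addnACA subnKC ?mulnD_compl; [|lia|lia].
have le_bn_bnb : b - n <= (b - n) * b by rewrite leq_pmulr //; lia.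
rewrite mulnBr muln1; lia.
Qed.

Lemma mother_edge_compl (n b d1 d2 : nat) :
  0 < n -> n <= b ->
  mother_edge n b d1 d2 -> mother_edge n b (b - 1 - d1) (b - 1 - d2).
Proof.
move=> n_gt0 le_nb /and3P [lt_d1b lt_d2b]; rewrite /mother_edge /lambda => le_res.
apply/and3P; split; [lia | lia |].
have sum_eq := mother_digit_compl_sum n_gt0 le_nb lt_d1b lt_d2b.
rewrite (modn_compl _ sum_eq le_res) ?leq_subr //; lia.
Qed.

Lemma carry_eq_compl (n b c1 c2 d1 d2 : nat) :
  c1 < n -> c2 < n -> d1 < b -> d2 < b ->
  n * d2 + c1 = b * c2 + d1 ->
  n * (b - 1 - d2) + (n - 1 - c1) = b * (n - 1 - c2) + (b - 1 - d1).
Proof.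
move=> lt_c1n lt_c2n lt_d1b lt_d2b carry_eq.
apply/(@addnI (n * d2 + c1)); rewrite [in RHS]carry_eq.
rewrite addnACA [in RHS]addnACA !mulnD_compl ?subnKC; try lia.
have le_n_nb : n <= n * b by rewrite leq_pmulr //; lia.
have le_b_nb : b <= n * b by rewrite leq_pmull //; lia.
rewrite !mulnBr !muln1 [b * n]mulnC; lia.
Qed.

Lemma hs_label_compl (n b c1 c2 d1 d2 : nat) :
  n <= b -> hs_label n b c1 c2 d1 d2 ->
  hs_label n b (n - 1 - c1) (n - 1 - c2) (b - 1 - d1) (b - 1 - d2).
Proof.
move=> le_nb /and4P [lt_c1n lt_c2n edge /eqP carry_eq].
have n_gt0 : 0 < n by lia.
have /and3P [lt_d1b lt_d2b _] := edge.
apply/and4P; split; [lia | lia | exact: mother_edge_compl |].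
by rewrite (carry_eq_compl lt_c1n lt_c2n lt_d1b lt_d2b carry_eq).
Qed.

Theorem theorem11 (n b c1 c2 d1 d2 : nat) :
  1 < n -> n < b ->
  hs_label n b c1 c2 d1 d2 ->
  hs_edge n b (n - 1 - c1) (n - 1 - c2) /\
  hs_label n b (n - 1 - c1) (n - 1 - c2) (b - 1 - d1) (b - 1 - d2).
Proof.
move=> _ /ltnW le_nb /(hs_label_compl le_nb) label_compl.
by split=> //; exists (b - 1 - d1), (b - 1 - d2).
Qed.
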